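(* Let $X\subseteq\mathbb{FT}^n$ be a projective $n$-polytope and let $\phi:X\to X$ be an $\mathbb{FT}$-module automorphism. Then (i) $\phi$ extends to an $\mathbb{FT}$-module automorphism of $\mathbb{FT}^n$; and (ii) $\phi$ is the restriction to $X$ of a classical affine linear map $\mathbb{R}^n\to\mathbb{R}^n$.
   Context: $\mathbb{FT}$ is $\mathbb{R}$ with $a\oplus b=\max(a,b)$, $a\otimes b=a+b$. $\mathbb{FT}^n$ is an $\mathbb{FT}$-module under componentwise maximum and scaling $(\lambda\otimes x)_i=\lambda+x_i$; module morphisms preserve $\oplus$ and scaling. A tropical polytope is a finitely generated submodule of $\mathbb{FT}^n$. A module $P$ is projective if for every surjective morphism $\pi:N\to M$ and every morphism $g:P\to M$ there exists a morphism $h:P\to N$ with $\pi\circ h=g$. A projective $n$-polytope in $\mathbb{FT}^n$ is a tropical polytope in $\mathbb{FT}^n$ that is projective as an $\mathbb{FT}$-module and whose generator dimension (minimal cardinality of a generating set) is $n$ (for projective polytopes this equals the topological dimension, which is pure, and the dual dimension). *)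

From HB Require Import structures.
From mathcomp Require Import all_boot all_order all_algebra.
From mathcomp Require Import reals.
Set Implicit Arguments. Unset Strict Implicit. Unset Printing Implicit Defensive.
Import Order.TTheory GRing.Theory Num.Theory.
Local Open Scope ring_scope.

(* FT = R with a (+) b = max a b, a (x) b = a + b (no -oo). *)

Record ftmod (R : realType) := FTMod {
  car :> Type;
  fjoin : car -> car -> car;
  fscale : R -> car -> car;
  fjoinA : forall x y z, fjoin x (fjoin y z) = fjoin (fjoin x y) z;
  fjoinC : forall x y, fjoin x y = fjoin y x;
  fscaleM : forall l m x, fscale (l + m) x = fscale l (fscale m x);
  fscaleDr : forall l x y, fscale l (fjoin x y) = fjoin (fscale l x) (fscale l y);
  fscaleDl : forall l m x, fscale (Num.max l m) x = fjoin (fscale l x) (fscale m x);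
  fscale0 : forall x, fscale 0 x = x
}.

Definition ft_morph (R : realType) (A B : ftmod R) (f : A -> B) : Prop :=
  (forall x y, f (fjoin x y) = fjoin (f x) (f y)) /\
  (forall l x, f (fscale l x) = fscale l (f x)).

Definition tjoin (R : realType) n (x y : 'rV[R]_n) : 'rV[R]_n :=
  \row_i Num.max (x 0 i) (y 0 i).
Definition tscale (R : realType) n (l : R) (x : 'rV[R]_n) : 'rV[R]_n :=
  \row_i (l + x 0 i).

Definition ftn_morph (R : realType) n (f : 'rV[R]_n -> 'rV[R]_n) : Prop :=
  (forall x y, f (tjoin x y) = tjoin (f x) (f y)) /\
  (forall l x, f (tscale l x) = tscale l (f x)).

Inductive tspan (R : realType) n (s : seq 'rV[R]_n) : 'rV[R]_n -> Prop :=
| tspan_gen x : x \in s -> tspan s x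
| tspan_join x y : tspan s x -> tspan s y -> tspan s (tjoin x y)
| tspan_scale l x : tspan s x -> tspan s (tscale l x).

Definition is_submodule (R : realType) n (X : 'rV[R]_n -> Prop) : Prop :=
  (forall x y, X x -> X y -> X (tjoin x y)) /\
  (forall l x, X x -> X (tscale l x)).

Definition generates (R : realType) n (s : seq 'rV[R]_n) (X : 'rV[R]_n -> Prop) :=
  (forall x, x \in s -> X x) /\ (forall x, X x <-> tspan s x).

Definition tropical_polytope (R : realType) n (X : 'rV[R]_n -> Prop) : Prop :=
  is_submodule X /\ exists s, generates s X.

Definition gen_dim (R : realType) n (X : 'rV[R]_n -> Prop) (k : nat) : Prop :=
  (exists s, size s = k /\ generates s X) /\
  (forall s, generates s X -> (k <= size s)%N).

Definition sub_morph (R : realType) n (X : 'rV[R]_n -> Prop) (M : ftmod R)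
  (g : {x | X x} -> M) : Prop :=
  (forall x y z : {x | X x}, proj1_sig z = tjoin (proj1_sig x) (proj1_sig y) ->
       g z = fjoin (g x) (g y)) /\
  (forall l (x z : {x | X x}), proj1_sig z = tscale l (proj1_sig x) ->
       g z = fscale l (g x)).

Definition projective_sub (R : realType) n (X : 'rV[R]_n -> Prop) : Prop :=
  forall (N M : ftmod R) (pi : N -> M), ft_morph pi -> (forall m, exists y, pi y = m) ->
  forall g : {x | X x} -> M, sub_morph g ->
  exists h : {x | X x} -> N, sub_morph h /\ forall x, pi (h x) = g x.

Definition projective_npolytope (R : realType) n (X : 'rV[R]_n -> Prop) : Prop :=
  tropical_polytope X /\ projective_sub X /\ gen_dim X n.

Definition sub_endo (R : realType) n (X : 'rV[R]_n -> Prop)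
  (phi : {x | X x} -> {x | X x}) : Prop :=
  (forall x y z : {x | X x}, proj1_sig z = tjoin (proj1_sig x) (proj1_sig y) ->
       proj1_sig (phi z) = tjoin (proj1_sig (phi x)) (proj1_sig (phi y))) /\
  (forall l (x z : {x | X x}), proj1_sig z = tscale l (proj1_sig x) ->
       proj1_sig (phi z) = tscale l (proj1_sig (phi x))).

From mathcomp Require Import all_boot all_order all_algebra.
From mathcomp Require Import reals.
From Stdlib Require Import ProofIrrelevance.
From mathcomp Require Import lra.
Set Implicit Arguments. Unset Strict Implicit. Unset Printing Implicit Defensive.
Import Order.TTheory GRing.Theory Num.Theory.
Local Open Scope ring_scope.

(* Projectivity splits the surjection [a |-> \join_k a_k (x) v_k] from FT^n onto X, for a
   minimal generating family [v].  Minimality forces each generator [v_k] to be read off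
   at a single coordinate [i_k]: every [x] in [X] has [x_(i_k) = h(x)_k + (v_k)_(i_k)],
   where [h] is the splitting, and [k |-> i_k] is a bijection.  Normalising the
   generators there yields a frame [g_1, ..., g_n] of [X], i.e. [x = \join_i x_i (x) g_i].
   An automorphism preserves and reflects the order, so evaluating it on frame
   decompositions shows that every coordinate of [phi x] is a fixed translate of one
   coordinate of [x]; minimality again makes this choice of coordinates a permutation.
   So [phi] is a permutation of coordinates followed by a translation, which is both a
   tropical automorphism and a classical affine map of R^n. *)

Lemma sig_inj (T : Type) (P : T -> Prop) (a b : {x | P x}) :
  proj1_sig a = proj1_sig b -> a = b.
Proof. exact: eq_sig_hprop (fun x => proof_irrelevance (P x)) a b. Qed.

Section BigMaxMin.
Variables (R : realType) (k : nat).
Implicit Types F G : 'I_k.+1 -> R.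

(* [F ord0] serves as neutral element: [max] is idempotent and [R] has no least element. *)
Definition bigmaxr F := \big[Num.max/F ord0]_i F i.
Definition bigminr F := \big[Num.min/F ord0]_i F i.

Lemma le_bigmaxr F i : F i <= bigmaxr F.
Proof. exact: le_bigmax. Qed.

Lemma bigmaxr_le F B : (forall i, F i <= B) -> bigmaxr F <= B.
Proof. by move=> FB; apply: bigmax_le. Qed.

Lemma bigmaxr_attained F : exists i, bigmaxr F = F i.
Proof.
rewrite /bigmaxr; elim/big_ind: _ => [|a b [i ->] [j ->]|i _]; try by eexists.
by case: (leP (F i) (F j)); eexists.
Qed.

Lemma bigminr_le F i : bigminr F <= F i.
Proof. exact: bigmin_le. Qed.

Lemma le_bigminr F B : (forall i, B <= F i) -> B <= bigminr F.
Proof. by move=> BF; apply: le_bigmin. Qed.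

Lemma bigminr_attained F : exists i, bigminr F = F i.
Proof.
rewrite /bigminr; elim/big_ind: _ => [|a b [i ->] [j ->]|i _]; try by eexists.
by case: (leP (F i) (F j)); eexists.
Qed.

Lemma eq_bigmaxr F G : F =1 G -> bigmaxr F = bigmaxr G.
Proof. by move=> FG; rewrite /bigmaxr FG; apply: eq_bigr. Qed.

Lemma le_bigmaxr2 F G : (forall i, F i <= G i) -> bigmaxr F <= bigmaxr G.
Proof. by move=> FG; apply: bigmaxr_le => i; apply: le_trans (FG i) (le_bigmaxr G i). Qed.

Lemma bigmaxrDl c F : bigmaxr (fun i => c + F i) = c + bigmaxr F.
Proof. by rewrite /bigmaxr (big_morph (fun x => c + x) (addr_maxr c) erefl). Qed.

Lemma bigmaxr_max F G :
  bigmaxr (fun i => Num.max (F i) (G i)) = Num.max (bigmaxr F) (bigmaxr G).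
Proof.
apply: le_anti; rewrite ge_max; apply/and3P; split.
- by apply: bigmaxr_le => i; rewrite ge_max !le_max !le_bigmaxr ?orbT.
- by apply: le_bigmaxr2 => i; rewrite le_max lexx.
- by apply: le_bigmaxr2 => i; rewrite le_max lexx orbT.
Qed.

End BigMaxMin.

Section TropicalRows.
Variables (R : realType) (n : nat).
Implicit Types (x y z : 'rV[R]_n) (l : R).

Definition tle x y := forall i, x 0 i <= y 0 i.

Lemma tle_anti x y : tle x y -> tle y x -> x = y.
Proof. by move=> xy yx; apply/rowP => i; apply: le_anti; rewrite xy yx. Qed.

Lemma tle_tjoinl x y : tle x (tjoin x y).
Proof. by move=> i; rewrite mxE le_max lexx. Qed.

Lemma tle_tjoinr x y : tle y (tjoin x y).
Proof. by move=> i; rewrite mxE le_max lexx orbT. Qed.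

Lemma tjoin_idPr x y : tle x y -> tjoin x y = y.
Proof. by move=> xy; apply/rowP => i; rewrite mxE max_r. Qed.

Lemma tjoinA x y z : tjoin x (tjoin y z) = tjoin (tjoin x y) z.
Proof. by apply/rowP => i; rewrite !mxE maxA. Qed.

Lemma tjoinC x y : tjoin x y = tjoin y x.
Proof. by apply/rowP => i; rewrite !mxE maxC. Qed.

Lemma tscaleD l l' x : tscale (l + l') x = tscale l (tscale l' x).
Proof. by apply/rowP => i; rewrite !mxE addrA. Qed.

Lemma tscale_tjoin l x y : tscale l (tjoin x y) = tjoin (tscale l x) (tscale l y).
Proof. by apply/rowP => i; rewrite !mxE addr_maxr. Qed.

Lemma tscale_max l l' x : tscale (Num.max l l') x = tjoin (tscale l x) (tscale l' x).
Proof. by apply/rowP => i; rewrite !mxE addr_maxl. Qed.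

Lemma tscale0 x : tscale 0 x = x.
Proof. by apply/rowP => i; rewrite !mxE add0r. Qed.

Definition FTn : ftmod R :=
  FTMod tjoinA tjoinC tscaleD tscale_tjoin tscale_max tscale0.

Variable k : nat.
Implicit Types w : 'I_k.+1 -> 'rV[R]_n.

Definition tbig w := \big[@tjoin R n/w ord0]_p w p.

Lemma tbig_coord w q : tbig w 0 q = bigmaxr (fun p => w p 0 q).
Proof.
by rewrite /tbig (big_morph (fun x => x 0 q) (op1 := Num.max) (fun x y => mxE _ _ _ _) erefl).
Qed.

Lemma tbig_eq x w : (forall p, tle (w p) x) -> (forall q, exists p, w p 0 q = x 0 q) ->
  tbig w = x.
Proof.
move=> wx xw; apply/rowP => q; rewrite tbig_coord; apply: le_anti; apply/andP; split.
  by apply: bigmaxr_le => p; apply: wx.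
by case: (xw q) => p <-; apply: le_bigmaxr.
Qed.

End TropicalRows.

Section Submodule.
Variables (R : realType) (n : nat) (X : 'rV[R]_n -> Prop).
Hypothesis HX : is_submodule X.
Local Notation S := {x | X x}.

Definition sjoin (a b : S) : S :=
  exist _ (tjoin (proj1_sig a) (proj1_sig b)) (HX.1 _ _ (proj2_sig a) (proj2_sig b)).
Definition sscale l (a : S) : S :=
  exist _ (tscale l (proj1_sig a)) (HX.2 l _ (proj2_sig a)).

Lemma sjoinA a b c : sjoin a (sjoin b c) = sjoin (sjoin a b) c.
Proof. by apply: sig_inj; rewrite /= tjoinA. Qed.
Lemma sjoinC a b : sjoin a b = sjoin b a.
Proof. by apply: sig_inj; rewrite /= tjoinC. Qed.
Lemma sscaleD l l' a : sscale (l + l') a = sscale l (sscale l' a).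
Proof. by apply: sig_inj; rewrite /= tscaleD. Qed.
Lemma sscale_sjoin l a b : sscale l (sjoin a b) = sjoin (sscale l a) (sscale l b).
Proof. by apply: sig_inj; rewrite /= tscale_tjoin. Qed.
Lemma sscale_max l l' a : sscale (Num.max l l') a = sjoin (sscale l a) (sscale l' a).
Proof. by apply: sig_inj; rewrite /= tscale_max. Qed.
Lemma sscale0 a : sscale 0 a = a.
Proof. by apply: sig_inj; rewrite /= tscale0. Qed.

Definition submod : ftmod R :=
  FTMod sjoinA sjoinC sscaleD sscale_sjoin sscale_max sscale0.

Lemma tspan_sub s : (forall y, y \in s -> X y) -> forall x, tspan s x -> X x.
Proof. by move=> sX x; elim=> [y /sX|a b _ Ha _ Hb|l a _ Ha]; [|apply: HX.1|apply: HX.2]. Qed.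

Variable k : nat.

Definition sbig (w : 'I_k.+1 -> S) := \big[sjoin/w ord0]_p w p.

Lemma val_sbig w : proj1_sig (sbig w) = tbig (fun p => proj1_sig (w p)).
Proof.
by rewrite /sbig (big_morph (@proj1_sig _ X) (op1 := @tjoin R n) (op2 := sjoin)
  (fun a b => erefl) erefl).
Qed.

Variables (d : nat) (F : S -> 'rV[R]_d).
Hypothesis HF : sub_morph (M := FTn R d) F.

Lemma morph_sjoin a b : F (sjoin a b) = tjoin (F a) (F b).
Proof. exact: HF.1. Qed.

Lemma morph_sscale l a : F (sscale l a) = tscale l (F a).
Proof. exact: HF.2. Qed.

Lemma morph_tle (a b : S) : tle (proj1_sig a) (proj1_sig b) -> tle (F a) (F b).
Proof.
move=> ab; have -> : b = sjoin a b by apply: sig_inj; rewrite /= tjoin_idPr.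
by rewrite morph_sjoin; apply: tle_tjoinl.
Qed.

Lemma morph_coord_attained (x : S) (w : 'I_k.+1 -> S) :
  proj1_sig x = tbig (fun p => proj1_sig (w p)) -> forall q, exists p, F x 0 q = F (w p) 0 q.
Proof.
rewrite -val_sbig => /sig_inj -> q.
rewrite /sbig (big_morph F (op1 := @tjoin R d) morph_sjoin erefl) -/(tbig _) tbig_coord.
exact: bigmaxr_attained.
Qed.

Lemma morph_tle_reflect (a b : S) : injective F ->
  tle (F a) (F b) -> tle (proj1_sig a) (proj1_sig b).
Proof.
move=> F_inj ab; have <- : sjoin a b = b by apply: F_inj; rewrite morph_sjoin tjoin_idPr.
exact: tle_tjoinl.
Qed.

End Submodule.

Section Covering.
Variables (R : realType) (m : nat).
Local Notation N := m.+1.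
Implicit Types (x y z : 'rV[R]_N) (u : seq 'rV[R]_N).

Definition supports y x (p : 'I_N) := exists l, tle (tscale l y) x /\ l + y 0 p = x 0 p.

Lemma supports_trans y z x p : supports y z p -> supports z x p -> supports y x p.
Proof.
move=> [l [lyz eyz]] [l' [l'zx ezx]]; exists (l' + l); split; last lra.
by move=> i; move: (lyz i) (l'zx i); rewrite !mxE; lra.
Qed.

Definition covers u (X : 'rV[R]_N -> Prop) :=
  forall x, X x -> forall p, exists2 y, y \in u & supports y x p.

Variable X : 'rV[R]_N -> Prop.
Hypothesis HX : is_submodule X.

Lemma covers_generates u : (forall y, y \in u -> X y) -> covers u X -> generates u X.
Proof.
move=> uX cov; split=> // x; split; last exact: (tspan_sub HX uX).
move=> Xx; have /fin_all_exists [yl yl_supp] : forall p, exists yl : 'rV[R]_N * R,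
    yl.1 \in u /\ tle (tscale yl.2 yl.1) x /\ yl.2 + yl.1 0 p = x 0 p.
  by move=> p; case: (cov x Xx p) => y yu [l ?]; exists (y, l).
have <- : tbig (fun p => tscale (yl p).2 (yl p).1) = x.
  apply: tbig_eq => [p|p]; first by case: (yl_supp p) => _ [].
  by exists p; rewrite mxE; case: (yl_supp p) => _ [].
rewrite /tbig; elim/big_ind: _ => [|a b|p _]; try exact: tspan_join.
  by apply: tspan_scale; apply: tspan_gen; case: (yl_supp ord0).
by apply: tspan_scale; apply: tspan_gen; case: (yl_supp p).
Qed.

Lemma gen_dim_irredundant (w : 'I_N -> 'rV[R]_N) (k : 'I_N) :
  gen_dim X N -> (forall j, X (w j)) -> covers (codom w) X ->
  ~ (forall p, exists2 j, j != k & supports (w j) (w k) p).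
Proof.
move=> [_ minN] Xw cov others.
pose u := [seq w j | j <- rem k (enum 'I_N)].
have mem_u j : j != k -> w j \in u.
  by move=> jk; apply: map_f; rewrite mem_rem_uniq ?enum_uniq // inE jk mem_enum.
have : generates u X.
  apply: covers_generates => [y /mapP [j _ ->] //|x Xx p].
  case: (cov x Xx p) => y /codomP [j ->] wjx.
  case: (eqVneq j k) wjx => [->|jk] wjx; last by exists (w j); rewrite ?mem_u.
  by case: (others p) => i ik wik; exists (w i); [rewrite mem_u | apply: supports_trans wjx].
by move/minN; rewrite size_map size_rem ?mem_enum // size_enum_ord ltnn.
Qed.

End Covering.

Section Projection.
Variables (R : realType) (m : nat).
Local Notation N := m.+1.
Variable X : 'rV[R]_N -> Prop.
Hypothesis HX : is_submodule X.
Local Notation S := {x | X x}.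
Variable v : 'I_N -> 'rV[R]_N.
Hypothesis v_gen : generates (codom v) X.
Implicit Types a x : 'rV[R]_N.

Lemma gen_in k : X (v k).
Proof. by apply: v_gen.1; apply: codom_f. Qed.

Definition tcomb a := tbig (fun k => tscale (a 0 k) (v k)).
(* [tres x] is the largest [a] with [tle (tcomb a) x]. *)
Definition tres x := \row_k bigminr (fun i => x 0 i - v k 0 i).

Lemma tcomb_coord a i : tcomb a 0 i = bigmaxr (fun k => a 0 k + v k 0 i).
Proof. by rewrite tbig_coord; apply: eq_bigmaxr => k; rewrite mxE. Qed.

Lemma tcomb_in a : X (tcomb a).
Proof.
rewrite /tcomb/tbig; elim/big_ind: _ => [|x y|k _]; [|exact: HX.1|];
  by apply: HX.2; apply: gen_in.
Qed.

Lemma tcomb_tjoin a b : tcomb (tjoin a b) = tjoin (tcomb a) (tcomb b).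
Proof.
apply/rowP => i; rewrite mxE !tcomb_coord -bigmaxr_max.
by apply: eq_bigmaxr => k; rewrite mxE addr_maxl.
Qed.

Lemma tcomb_tscale l a : tcomb (tscale l a) = tscale l (tcomb a).
Proof.
apply/rowP => i; rewrite mxE !tcomb_coord -bigmaxrDl.
by apply: eq_bigmaxr => k; rewrite mxE addrA.
Qed.

Lemma tcomb_tle a b : tle a b -> tle (tcomb a) (tcomb b).
Proof. by move=> ab i; rewrite !tcomb_coord; apply: le_bigmaxr2 => k; rewrite lerD2r. Qed.

Lemma tres_tle x y : tle x y -> tle (tres x) (tres y).
Proof.
move=> xy k; rewrite !mxE; apply: le_bigminr => i.
by apply: le_trans (bigminr_le _ i) _; rewrite lerD2r.
Qed.

Lemma tcomb_tres_le x : tle (tcomb (tres x)) x.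
Proof.
move=> i; rewrite tcomb_coord; apply: bigmaxr_le => k; rewrite mxE.
by have := bigminr_le (fun i => x 0 i - v k 0 i) i; lra.
Qed.

Lemma tcomb_tres x : X x -> tcomb (tres x) = x.
Proof.
move=> /(v_gen.2 x) x_span; apply: tle_anti; first exact: tcomb_tres_le.
elim: x_span => [_ /codomP [k ->]|a b _ IHa _ IHb|l a _ IHa] i.
- rewrite tcomb_coord; apply: le_trans (le_bigmaxr _ k).
  have : 0 <= tres (v k) 0 k by rewrite mxE; apply: le_bigminr => j; rewrite subrr.
  lra.
- rewrite mxE ge_max; apply/andP; split.
    by apply: le_trans (IHa i) _; apply/tcomb_tle/tres_tle/tle_tjoinl.
  by apply: le_trans (IHb i) _; apply/tcomb_tle/tres_tle/tle_tjoinr.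
- have : tle (tscale l (tres a)) (tres (tscale l a)).
    move=> k; rewrite !mxE; apply: le_bigminr => j; rewrite mxE.
    by have := bigminr_le (fun i => a 0 i - v k 0 i) j; lra.
  by move/tcomb_tle/(_ i); rewrite tcomb_tscale !mxE; have := IHa i; lra.
Qed.

Definition tcomb_sub a : submod HX := exist _ (tcomb a) (tcomb_in a).

Lemma tcomb_sub_morph : ft_morph (A := FTn R N) tcomb_sub.
Proof. by split=> [a b|l a]; apply: sig_inj; [apply: tcomb_tjoin|apply: tcomb_tscale]. Qed.

Lemma tcomb_sub_surj (x : submod HX) : exists a, tcomb_sub a = x.
Proof. by exists (tres (proj1_sig x)); apply: sig_inj; apply: tcomb_tres; apply: proj2_sig. Qed.

Lemma projective_section : projective_sub X ->
  exists h : S -> 'rV[R]_N,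
    sub_morph (M := FTn R N) h /\ forall x : S, tcomb (h x) = proj1_sig x.
Proof.
move=> Xproj; have id_morph : sub_morph (M := submod HX) id.
  by split=> [x y z e|l x z e]; apply: sig_inj; rewrite /= e.
case: (Xproj _ _ _ tcomb_sub_morph tcomb_sub_surj _ id_morph) => h [h_morph h_sec].
by exists h; split=> // x; exact: (congr1 (@proj1_sig _ _) (h_sec x)).
Qed.

End Projection.

Section Frames.
Variables (R : realType) (m : nat).
Local Notation N := m.+1.
Variable X : 'rV[R]_N -> Prop.
Hypothesis HX : is_submodule X.
Local Notation S := {x | X x}.

(* [g i] is the least point of [X] whose [i]-th coordinate vanishes. *)
Definition coordinate_frame (g : 'I_N -> S) := forall i, proj1_sig (g i) 0 i = 0 /\
  forall x : S, tle (tscale (proj1_sig x 0 i) (proj1_sig (g i))) (proj1_sig x).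

Variable g : 'I_N -> S.
Hypothesis g_frame : coordinate_frame g.

Lemma frame_supports (x : S) p : supports (proj1_sig (g p)) (proj1_sig x) p.
Proof. by exists (proj1_sig x 0 p); case: (g_frame p) => -> ?; rewrite addr0. Qed.

Lemma frame_decomp (x : S) :
  proj1_sig x = tbig (fun p => proj1_sig (sscale HX (proj1_sig x 0 p) (g p))).
Proof.
symmetry; apply: tbig_eq => p; first by case: (g_frame p) => _ /(_ x).
by exists p; rewrite /= mxE; case: (g_frame p) => -> _; rewrite addr0.
Qed.

Lemma frame_coords_independent i i' d : gen_dim X N -> i != i' ->
  ~ (forall z : S, proj1_sig z 0 i' = proj1_sig z 0 i + d).
Proof.
move=> gdim ii' shift.
apply: (gen_dim_irredundant HX (w := fun p => proj1_sig (g p)) (k := i')) => //.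
- by move=> j; apply: proj2_sig.
- move=> x Xx p; exists (proj1_sig (g p)); first exact: codom_f.
  exact: (frame_supports (exist _ x Xx)).
move=> p; case: (eqVneq p i') => [->|pi']; last by exists p => //; apply: frame_supports.
exists i => //.
exists (proj1_sig (g i') 0 i); split; first by case: (g_frame i) => _; apply.
have := shift (g i); have := shift (g i').
by case: (g_frame i) => gi _; case: (g_frame i') => gi' _; lra.
Qed.

End Frames.

Section FrameFromSection.
Variables (R : realType) (m : nat).
Local Notation N := m.+1.
Variable X : 'rV[R]_N -> Prop.
Hypothesis HX : is_submodule X.
Hypothesis gdim : gen_dim X N.
Local Notation S := {x | X x}.
Variable v : 'I_N -> 'rV[R]_N.
Hypothesis v_gen : generates (codom v) X.
Variable h : S -> 'rV[R]_N.
Hypothesis h_morph : sub_morph (M := FTn R N) h.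
Hypothesis h_sec : forall x : S, tcomb v (h x) = proj1_sig x.

Local Notation vsig k := (exist X (v k) (gen_in v_gen k)).

Lemma section_le (x : S) k i : h x 0 k + v k 0 i <= proj1_sig x 0 i.
Proof. by rewrite -h_sec tcomb_coord; apply: (le_bigmaxr (fun k => h x 0 k + v k 0 i)). Qed.

Lemma section_attained (x : S) i : exists k, proj1_sig x 0 i = h x 0 k + v k 0 i.
Proof. by rewrite -h_sec tcomb_coord; apply: bigmaxr_attained. Qed.

Lemma section_tscale_le (x : S) k : tle (tscale (h x 0 k) (v k)) (proj1_sig x).
Proof. by move=> i; rewrite mxE; apply: section_le. Qed.

Lemma gen_covers : covers (codom v) X.
Proof.
move=> x Xx p; case: (section_attained (exist _ x Xx) p) => k xp.
exists (v k); first exact: codom_f.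
by exists (h (exist _ x Xx) 0 k); split; first exact: section_tscale_le.
Qed.

Lemma section_gen_le (x : S) k l : h x 0 l + h (vsig l) 0 k <= h x 0 k.
Proof.
have := morph_tle HX h_morph (a := sscale HX (h x 0 l) (vsig l)) (section_tscale_le x l) k.
by rewrite morph_sscale // mxE.
Qed.

Lemma section_diag k : h (vsig k) 0 k = 0.
Proof.
(* If [h (v k)_k < 0], the other generators support [v k] at every coordinate. *)
apply: le_anti; apply/andP; split; first by have := section_le (vsig k) k k; rewrite /=; lra.
rewrite leNgt; apply/negP => neg.
apply: (gen_dim_irredundant HX (k := k) gdim (gen_in v_gen) gen_covers) => p.
case: (section_attained (vsig k) p) => j vkp.
exists j; first by apply: contraTneq neg => jk; rewrite -leNgt; move: vkp; rewrite jk /=; lra.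
by exists (h (vsig k) 0 j); split; [apply: (section_tscale_le (vsig k))|].
Qed.

Lemma tres_le_section (x : S) k : tres v (proj1_sig x) 0 k <= h x 0 k.
Proof.
have res_le : tle (proj1_sig (sscale HX (tres v (proj1_sig x) 0 k) (vsig k))) (proj1_sig x).
  move=> i; rewrite /= !mxE.
  by have := bigminr_le (fun i => proj1_sig x 0 i - v k 0 i) i; lra.
have := morph_tle HX h_morph res_le k.
by rewrite morph_sscale // mxE section_diag addr0.
Qed.

Lemma section_coord k : exists i, forall x : S, proj1_sig x 0 i = h x 0 k + v k 0 i.
Proof.
(* [z := \join_l (- h (v l)_k) (x) v l] has [h z_k = 0]; the sought coordinate is one
   minimising [z - v k]. *)
pose w l := sscale HX (- h (vsig l) 0 k) (vsig l).
pose z := sbig HX w.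
have hz : h z 0 k = 0.
  have [l ->] := morph_coord_attained HX h_morph (val_sbig HX w) k.
  by rewrite morph_sscale // !mxE addNr.
have := tres_le_section z k; rewrite mxE hz.
case: (bigminr_attained (fun i => proj1_sig z 0 i - v k 0 i)) => i -> zi.
exists i => x; apply: le_anti; rewrite section_le andbT.
have [j xi] := section_attained x i.
have zi' : - h (vsig j) 0 k + v j 0 i <= proj1_sig z 0 i.
  by rewrite val_sbig tbig_coord; apply: le_trans (le_bigmaxr _ j) => /=; rewrite mxE.
have := section_gen_le x k j; lra.
Qed.

Lemma section_coord_inj k k' i :
  (forall x : S, proj1_sig x 0 i = h x 0 k + v k 0 i) ->
  (forall x : S, proj1_sig x 0 i = h x 0 k' + v k' 0 i) -> k = k'.
Proof.
(* Both readings force [v k'] to be a tropical multiple of [v k]. *)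
move=> ik ik'; apply/eqP; apply/negP => /negP kk'.
apply: (gen_dim_irredundant HX (k := k') gdim (gen_in v_gen) gen_covers) => p.
exists k => //; exists (h (vsig k') 0 k); split; first exact: (section_tscale_le (vsig k')).
have := ik (vsig k'); have := ik' (vsig k); have := section_le (vsig k) k' p.
have := section_le (vsig k') k p; rewrite /=; lra.
Qed.

Lemma frame_of_section : exists g : 'I_N -> S, coordinate_frame g.
Proof.
have [iota iotaP] := fin_all_exists section_coord.
have [iota' _ iota'K] : bijective iota.
  by apply: injF_bij => k k' e; apply: section_coord_inj (iotaP k) _; rewrite e; apply: iotaP.
exists (fun i => sscale HX (- v (iota' i) 0 i) (vsig (iota' i))) => i; split.
  by rewrite /= mxE addNr.
move=> x q; rewrite !mxE /=; have := iotaP (iota' i) x; rewrite iota'K.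
by have := section_le x (iota' i) q; lra.
Qed.

End FrameFromSection.

Section FrameAutomorphisms.
Variables (R : realType) (m : nat).
Local Notation N := m.+1.
Variable X : 'rV[R]_N -> Prop.
Hypothesis HX : is_submodule X.
Hypothesis gdim : gen_dim X N.
Local Notation S := {x | X x}.
Variable g : 'I_N -> S.
Hypothesis g_frame : coordinate_frame g.
Variable phi : S -> S.
Hypothesis phi_endo : sub_endo phi.
Hypothesis phi_bij : bijective phi.

Let F y := proj1_sig (phi y).

Let F_morph : sub_morph (M := FTn R N) F := phi_endo.

Let F_inj : injective F.
Proof. by move=> a b /sig_inj; apply: bij_inj. Qed.

Lemma endo_coord i : exists p, forall y : S, F y 0 i = F (g p) 0 i + proj1_sig y 0 p.
Proof.
case: phi_bij => psi _ phiK; pose x := psi (g i).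
have Fx : F x = proj1_sig (g i) by rewrite /F phiK.
have [p] := morph_coord_attained HX F_morph (frame_decomp HX g_frame x) i.
rewrite morph_sscale // mxE Fx; case: (g_frame i) => -> gi_le Fx0.
exists p => y; apply: le_anti; apply/andP; split.
  have cx_le : tle (F (sscale HX (F y 0 i) x)) (F y).
    by rewrite morph_sscale // Fx; apply: (gi_le (phi y)).
  by have := morph_tle_reflect HX F_morph F_inj cx_le p; rewrite /= mxE; lra.
have := morph_tle HX F_morph (a := sscale HX (proj1_sig y 0 p) (g p)) (proj2 (g_frame p) y) i.
by rewrite morph_sscale // mxE addrC.
Qed.

Lemma endo_coord_perm : exists (tau : 'I_N -> 'I_N) (mu : 'I_N -> R),
  bijective tau /\ forall (y : S) i, F y 0 i = mu i + proj1_sig y 0 (tau i).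
Proof.
have [tau tauP] := fin_all_exists endo_coord.
exists tau, (fun i => F (g (tau i)) 0 i); split => //.
apply: injF_bij => i i' tauii'; apply/eqP; apply/negP => /negP ii'.
case: phi_bij => psi _ phiK.
apply: (frame_coords_independent HX g_frame gdim ii'
  (d := F (g (tau i')) 0 i' - F (g (tau i)) 0 i)).
move=> z; have := tauP i (psi z); have := tauP i' (psi z).
by rewrite /F phiK tauii'; lra.
Qed.

End FrameAutomorphisms.

Section PermShift.
Variables (R : realType) (n : nat) (tau : 'I_n -> 'I_n) (mu : 'I_n -> R).

Definition perm_shift (y : 'rV[R]_n) := \row_i (mu i + y 0 (tau i)).

Lemma perm_shift_morph : ftn_morph perm_shift.
Proof. by split=> [x y|l x]; apply/rowP => i; rewrite !mxE ?addr_maxr // addrCA. Qed.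

Lemma perm_shift_bij : bijective tau -> bijective perm_shift.
Proof.
case=> tau' tauK tau'K.
exists (fun z : 'rV[R]_n => \row_j (z 0 (tau' j) - mu (tau' j))) => y; apply/rowP => j;
  rewrite !mxE ?tauK ?tau'K; lra.
Qed.

Lemma perm_shift_affine y :
  perm_shift y = y *m \matrix_(k, i) (k == tau i)%:R + \row_i mu i.
Proof.
apply/rowP => i; rewrite !mxE (bigD1 (tau i)) //= mxE eqxx mulr1 big1 ?addr0 1?addrC //.
by move=> k /negbTE ki; rewrite mxE ki mulr0.
Qed.

End PermShift.

Theorem theorem7p4 (R : realType) (n : nat) (X : 'rV[R]_n -> Prop)
  (phi : {x | X x} -> {x | X x}) :
  projective_npolytope X ->
  sub_endo phi -> bijective phi ->
  (exists Phi : 'rV[R]_n -> 'rV[R]_n,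
      ftn_morph Phi /\ bijective Phi /\
      forall x : {x | X x}, Phi (proj1_sig x) = proj1_sig (phi x)) /\
  (exists (A : 'M[R]_n) (b : 'rV[R]_n),
      forall x : {x | X x}, proj1_sig (phi x) = proj1_sig x *m A + b).
Proof.
case: n X phi => [|m] X phi.
  have rV0 (x y : 'rV[R]_0) : x = y by apply/rowP => -[].
  move=> _ _ _; split; last by exists 0, 0.
  by exists id; split; [|split; [exists id|]].
move=> [[HX _] [Xproj gdim]] phi_endo phi_bij.
have [[s [s_size s_gen]] _] := gdim.
pose t : m.+1.-tuple 'rV[R]_m.+1 := Tuple (introT eqP s_size).
have v_gen : generates (codom (tnth t)) X by rewrite codomE map_tnth_enum.
have [h [h_morph h_sec]] := projective_section HX v_gen Xproj.
have [g g_frame] := frame_of_section HX gdim v_gen h_morph h_sec.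
have [tau [mu [tau_bij phiE]]] := endo_coord_perm HX gdim g_frame phi_endo phi_bij.
have phi_shift x : proj1_sig (phi x) = perm_shift tau mu (proj1_sig x).
  by apply/rowP => i; rewrite mxE phiE.
split.
  exists (perm_shift tau mu); split; first exact: perm_shift_morph.
  by split; [exact: perm_shift_bij | move=> x; rewrite phi_shift].
by exists (\matrix_(k, i) (k == tau i)%:R), (\row_i mu i) => x; rewrite phi_shift perm_shift_affine.
Qed.
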